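(* In the hierarchical partition construction described in the context, let $S\in\mathcal S_j$ be a child of $S^*\in\mathcal S_{j+1}$ and suppose $S$ knows $S'\in\mathcal S_j$. Then either $S'\subseteq S^*$, or $S^*$ knows the parent of $S'$ (the unique set of $\mathcal S_{j+1}$ containing $S'$).
   Context: Let $(V,d)$ be a finite metric space with $|V|\ge 2$ which is doubling with constant $\lambda$: for every $v\in V$ and $r>0$ the open ball $B_{2r}(v)=\{u:d(u,v)<2r\}$ is contained in the union of at most $\lambda$ open balls $B_r(w)$, $w\in V$. Fix an integer $\eta\ge2$ and a real $\tau$ with $1+\frac{1}{2^{\eta-1}-1}\le\tau\le 2^{\eta}$. For $L\subseteq V$ and $r>0$, a greedy partition of $L$ with parameter $r$ is obtained by: set $L_0=L$; while $L_i\ne\emptyset$ choose any $v_i\in L_i$, let $P_i=\{u\in L_i: d(u,v_i)<2^{-\eta-1}r\}$ with leader $v_i$, and set $L_{i+1}=L_i\setminus P_i$. Hierarchical partition construction: choose $r_0$ with $0<r_0<\min_{u\ne v}d(u,v)$ and put $r_j=\tau^j r_0$. Let $\mathcal S_0=\{\{v\}:v\in V\}$, the leader of $\{v\}$ being $v$. While $\mathcal S_j$ has more than one element: let $L_j$ be the set of leaders of the sets in $\mathcal S_j$, let $\mathcal S'_{j+1}$ be a greedy partition of $L_j$ with parameter $2r_{j+1}$, and let $\mathcal S_{j+1}$ consist, for each $P\in\mathcal S'_{j+1}$, of the set $\bigcup\{S\in\mathcal S_j:\mathrm{leader}(S)\in P\}$, whose leader is defined to be the leader of $P$. Each $\mathcal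 S_j$ is a partition of $V$ refined by $\mathcal S_{j}$ of the previous level; $S\in\mathcal S_j$ is a child of $S^*\in\mathcal S_{j+1}$ if $S\subseteq S^*$ ($S^*$ is then its parent). For $S,S'\in\mathcal S_j$, $S$ knows $S'$ (at level $j$) if there are $v\in S$, $u\in S'$ with $d(v,u)<r_j$. *)

From HB Require Import structures.
From mathcomp Require Import all_boot all_order all_algebra.
Set Implicit Arguments. Unset Strict Implicit. Unset Printing Implicit Defensive.
Import Order.TTheory GRing.Theory Num.Theory.
Local Open Scope ring_scope.

Section Defs.
Variables (R : realFieldType) (V : finType) (d : V -> V -> R).

Definition is_metric : Prop :=
  [/\ forall u v, 0 <= d u v,
      forall u v, d u v = 0 <-> u = v,
      forall u v, d u v = d v u &
      forall u v w, d u w <= d u v + d v w].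

Definition ball (v : V) (r : R) : {set V} := [set u | d u v < r].

Definition doubling (lambda : nat) : Prop :=
  forall (v : V) (r : R), 0 < r ->
    exists W : {set V}, (#|W| <= lambda)%N /\
      ball v (2 * r) \subset \bigcup_(w in W) ball w r.

(* a "level" of the hierarchy: list of (leader, block) pairs *)

(* g is a run of the greedy partition of L with parameter r:
   g = [:: (v_0,P_0); (v_1,P_1); ...], v_i in L_i,
   P_i = {u in L_i | d(u,v_i) < 2^(-eta-1) r}, L_(i+1) = L_i \ P_i,
   stopping exactly when L_i is empty. *)
Fixpoint is_greedy (eta : nat) (r : R) (L : {set V}) (g : seq (V * {set V})) : bool :=
  match g with
  | [::] => L == set0
  | (v, P) :: g' =>
      [&& v \in L,
          P == [set u in L | d u v < (2 ^+ eta.+1)^-1 * r]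
        & is_greedy eta r (L :\: P) g']
  end.

Definition leaders (lv : seq (V * {set V})) : {set V} := [set p.1 | p in lv].

Definition blocks (lv : seq (V * {set V})) : seq {set V} := [seq p.2 | p <- lv].

Definition rad (tau r0 : R) (j : nat) : R := tau ^+ j * r0.

Definition hstep (eta : nat) (tau r0 : R) (j : nat) (lv lv' : seq (V * {set V})) : Prop :=
  exists g : seq (V * {set V}),
    is_greedy eta (2 * rad tau r0 j.+1) (leaders lv) g /\
    lv' = [seq (q.1, \bigcup_(p <- (lv : seq (V * {set V})) | p.1 \in q.2) p.2) | q : V * {set V} <- g].

Definition level0 : seq (V * {set V}) := [seq (v, [set v]) | v <- enum V].

Definition hierarchy (eta : nat) (tau r0 : R) (lev : nat -> seq (V * {set V})) (m : nat)
  : Prop :=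
  [/\ lev 0%N = level0,
      forall j, (j < m)%N ->
        (1 < size (lev j))%N /\ hstep eta tau r0 j (lev j) (lev j.+1) &
      (size (lev m) <= 1)%N].

Definition knows (tau r0 : R) (j : nat) (S S' : {set V}) : Prop :=
  exists v u, [/\ v \in S, u \in S' & d v u < rad tau r0 j].

End Defs.

From Pilot Require Import Defs.
From HB Require Import structures.
From mathcomp Require Import all_boot all_order all_algebra.
Import Order.TTheory GRing.Theory Num.Theory.
Local Open Scope ring_scope.
(* [rad] of the construction is shadowed by a homonym in the algebra library. *)
Import Defs.

(* The statement only needs two observations, so we in fact prove the
   stronger second alternative unconditionally.
   - The radii r_j = tau^j r_0 are nondecreasing because tau >= 1, which
     follows from the lower bound 1 + 1/(2^(eta-1) - 1) <= tau.
   - "Knowing" is monotone: if S knows S' at radius r_j, then any superset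
     of S knows any superset of S' at any radius r_k >= r_j, since the same
     witnessing pair of points works.
   Since S is contained in S* and S' in its parent, S* knows the parent of
   S' at level j+1. *)

Section Knows.
Context {R : realFieldType} {V : finType} {d : V -> V -> R} {tau r0 : R}.

Lemma rad_le_succ {j : nat} :
  1 <= tau -> 0 <= r0 -> rad tau r0 j <= rad tau r0 j.+1.
Proof.
move=> tau_ge1 r0_ge0; rewrite /rad exprS -mulrA ler_peMl //.
by rewrite mulr_ge0 // exprn_ge0 // (le_trans ler01).
Qed.

Lemma knows_widen {j k : nat} {S S' T T' : {set V}} :
  knows d tau r0 j S S' -> S \subset T -> S' \subset T' ->
  rad tau r0 j <= rad tau r0 k -> knows d tau r0 k T T'.
Proof.
move=> [v [u [vS uS' duv]]] sST sST' rad_jk.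
exists v, u; split; [exact: subsetP sST v vS | exact: subsetP sST' u uS' |].
exact: lt_le_trans duv rad_jk.
Qed.

End Knows.

Lemma tau_lb_ge1 {R : realFieldType} {eta : nat} {tau : R} :
  1 + (2 ^+ eta.-1 - 1)^-1 <= tau -> 1 <= tau.
Proof.
apply: le_trans; rewrite lerDl invr_ge0 subr_ge0.
by rewrite exprn_ege1 // ler1n.
Qed.

Theorem lemma4 (R : realFieldType) (V : finType) (d : V -> V -> R)
  (lambda eta : nat) (tau r0 : R) (lev : nat -> seq (V * {set V})) (m : nat)
  (j : nat) (S Sstar S' : {set V}) :
  is_metric d ->
  (1 < #|V|)%N ->
  doubling d lambda ->
  (2 <= eta)%N ->
  1 + (2 ^+ eta.-1 - 1)^-1 <= tau -> tau <= 2 ^+ eta ->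
  0 < r0 -> (forall u v : V, u != v -> r0 < d u v) ->
  hierarchy d eta tau r0 lev m ->
  (j < m)%N ->
  S \in blocks (lev j) -> Sstar \in blocks (lev j.+1) -> S' \in blocks (lev j) ->
  S \subset Sstar ->
  knows d tau r0 j S S' ->
  S' \subset Sstar \/
  (forall P' : {set V}, P' \in blocks (lev j.+1) -> S' \subset P' ->
     knows d tau r0 j.+1 Sstar P').
Proof.
move=> _ _ _ _ tau_lb _ r0_gt0 _ _ _ _ _ _ sSSstar SknowsS'.
right=> P' _ sS'P'.
apply: (knows_widen SknowsS' sSSstar sS'P').
exact: rad_le_succ (tau_lb_ge1 tau_lb) (ltW r0_gt0).
Qed.
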